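(* Consider the setting in the context. Let $\mathcal F=\{i_0,\dots,i_{\bar h-1}\}\subseteq[\bar n]$ be $\bar h$ distinct racks, $p\in[\bar h]$, and let $\widetilde{\mathbf{C}}$ be any codeword. (1) Let $b\in[1,u-v]$ and $\mathcal R\subseteq[\bar n]\setminus\mathcal F$ with $|\mathcal R|=\bar d$. For every $a\in[\bar s^{\bar n}]$ and $m\in[b]$, the quantities $\sum_{g=0}^{u-1}\theta^{gm}c^{(p+x)}_{i_pu+g,a}$ for $x\in[\bar s]$, and $H_{i_p,i}(a,m)$ for $i\in\mathcal F\setminus\{i_p\}$, are determined by (are linear functions of) the values $\{H_{i_p,j}(a',m): j\in\mathcal R,\ a'\in[\bar s^{\bar n}],\ m\in[b]\}$. (2) Let $b\in[u-v+1,u]$ and $\mathcal R'\subseteq[\bar n]\setminus\mathcal F$ with $|\mathcal R'|=\bar d+1$. For every $a\in[\bar s^{\bar n}]$ and $m\in[u-v,b)$, the quantities $\sum_{g=0}^{u-1}\theta^{gm}c^{(p+x)}_{i_pu+g,a}$ for $x\in[\bar s]$, and $H_{i_p,i}(a,m)$ for $i\in\mathcal F\setminus\{i_p\}$, are determined by (are linear functions of) the values $\{H_{i_p,j}(a',m): j\in\mathcal R',\ a'\in[\bar s^{\bar n}],\ m\in[u-v,b)\}$.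
   Context: $[N]=\{0,\dots,N-1\}$. Integers: $\bar n,u\ge2$ (with $u>1$), $\bar k$, $0\le v<u$, $n=\bar nu$, $k=\bar ku+v$, $r=n-k$, $\bar r=\bar n-\bar k$ (so $r=\bar ru-v$); $\bar d,\bar h,\delta$ with $\delta\in[1,\bar h)$ and $\bar k\le\bar d\le\bar n-\bar h$; $\bar s=\bar d-\bar k+1$. $\mathbb{F}$ is a finite field with $|\mathbb{F}|\ge n\bar s+1$ containing an element $\theta$ of multiplicative order $u$; $\xi$ is a primitive element of $\mathbb{F}$ and $\lambda_{i,j}=\xi^{i\bar s+j}$ for $i\in[\bar n]$, $j\in[\bar s]$. For $a\in[\bar s^{\bar n}]$ write $a=\sum_{i}a_i\bar s^i$ with $a_i\in[\bar s]$, and let $a(i,j)$ denote the integer whose $\bar s$-ary digits equal those of $a$ except the $i$-th digit is $j$. The code $\widetilde{\mathbf{C}}$ consists of all arrays $(c^{(y)}_{iu+g,a})$ over $\mathbb{F}$, indexed by $i\in[\bar n]$, $g\in[u]$, $a\in[\bar s^{\bar n}]$, $y\in[\bar s+\bar h-\delta]$ (node $iu+g$ stores $(c^{(y)}_{iu+g,a})_{y,a}$, a vector of length $(\bar s+\bar h-\delta)\bar s^{\bar n}$), satisfying $\sum_{i=0}^{\bar n-1}\sum_{g=0}^{u-1}\theta^{gt}\lambda_{i,a_i}^t c^{(y)}_{iu+g,a}=0$ for all $t\in[r]$, $a\in[\bar s^{\bar n}]$, $y\in[\bar s+\bar h-\delta]$. For $p\in[\bar h]$, rack $j\in[\bar n]\setminus\{i_p\}$,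 $a\in[\bar s^{\bar n}]$ and integer $m$, define $H_{i_p,j}(a,m)=\sum_{x=0}^{\bar s-1}\sum_{g=0}^{u-1}\theta^{gm}c^{(p+x)}_{ju+g,\,a(i_p,\,a_{i_p}\oplus x)}$, where superscripts are taken modulo $\bar s+\bar h-\delta$ and $\oplus$ is addition modulo $\bar s$. *)

From HB Require Import structures.
From mathcomp Require Import all_boot all_order all_algebra all_field.
Set Implicit Arguments. Unset Strict Implicit. Unset Printing Implicit Defensive.
Import GRing.Theory.
Local Open Scope ring_scope.

Definition digit (s a i : nat) : nat := ((a %/ s ^ i) %% s)%N.

(* a(i,j): a with its i-th base-s digit replaced by j (j < s) *)
Definition setdigit (s a i j : nat) : nat :=
  (a - digit s a i * s ^ i + j * s ^ i)%N.

(* An array c^{(y)}_{node,a} is modelled as c y node a (only in-range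
   indices matter). Parameters: nb = \bar n, u, kb = \bar k, v, db = \bar d,
   hb = \bar h, dl = \delta. *)
Definition sbar (kb db : nat) : nat := (db - kb + 1)%N.
Definition nsub (sb hb dl : nat) : nat := (sb + hb - dl)%N.

Definition is_codeword (F : fieldType) (nb u kb v db hb dl : nat)
    (theta xi : F) (c : nat -> nat -> nat -> F) : Prop :=
  let sb := sbar kb db in
  let r := (nb * u - (kb * u + v))%N in
  forall t a y, (t < r)%N -> (a < sb ^ nb)%N -> (y < nsub sb hb dl)%N ->
    \sum_(i < nb) \sum_(g < u)
       theta ^+ (g * t) * (xi ^+ (i * sb + digit sb a i)) ^+ t
         * c y (i * u + g)%N a = 0.

Definition Hval (F : fieldType) (sb Y u : nat) (theta : F)
    (c : nat -> nat -> nat -> F) (p ip j a m : nat) : F :=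
  \sum_(x < sb) \sum_(g < u)
     theta ^+ (g * m) *
       c ((p + x) %% Y)%N (j * u + g)%N
         (setdigit sb a ip ((digit sb a ip + x) %% sb)).

Definition Qval (F : fieldType) (Y u : nat) (theta : F)
    (c : nat -> nat -> nat -> F) (p ip x a m : nat) : F :=
  \sum_(g < u) theta ^+ (g * m) * c ((p + x) %% Y)%N (ip * u + g)%N a.

From HB Require Import structures.
From mathcomp Require Import all_boot all_order all_algebra all_field.
From mathcomp Require Import zify ring.
Import GRing.Theory.

(* Write t = m + u l.  As theta^u = 1, the parity check of index t collapses, after grouping the
   u nodes of each rack, to sum_i λ_{i,a_i}^t (sum_g theta^{gm} c_{iu+g,a}) = 0.  Adding these
   checks over the layers p + x at the rotated indices a(i_p, a_{i_p} ⊕ x) assembles H_{i_p,j}(a,m)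
   for every rack j ≠ i_p, while rack i_p keeps its s̄ rotated sums apart.  For fixed m, the
   checks with l < L form a Vandermonde system in the nodes λ^u, pairwise distinct because xi is
   primitive of order at least n̄ s̄ u, with the helper values H_{i_p,j}, j ∈ R, as known terms.
   There are n̄ - |R| - 1 + s̄ unknowns, that is r̄ in part (1) and r̄ - 1 in part (2), exactly the
   number of l keeping t below r, so Lagrange interpolation recovers each of them. *)

Definition rotdigit (s a i x : nat) : nat := setdigit s a i ((digit s a i + x) %% s).

Section Digits.

Variable s : nat.
Hypothesis s_gt0 : (0 < s)%N.

Lemma digit_ltn a i : (digit s a i < s)%N.
Proof. by rewrite ltn_pmod. Qed.

Lemma digit_decomp a i :
  a = ((a %/ s ^ i %/ s) * s + digit s a i) * s ^ i + a %% s ^ i.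
Proof. by rewrite /digit -divn_eq -divn_eq. Qed.

Lemma digitMD Q j B i i' : (j < s)%N -> (B < s ^ i)%N ->
  digit s ((Q * s + j) * s ^ i + B) i' =
  if i' == i then j else if (i' < i)%N then digit s B i' else digit s Q (i' - i.+1).
Proof.
move=> js Bs; rewrite /digit.
have s_pos k : (0 < s ^ k)%N by rewrite expn_gt0 s_gt0.
case: ifP => [/eqP -> | /negbT ne].
  by rewrite divnMDl // divn_small // addn0 modnMDl modn_small.
case: ifP => [lt | /negbT ge].
  have -> : i = (i' + (i - i').-1.+1)%N by lia.
  rewrite expnD mulnA mulnC mulnA divnMDl // expnS.
  by rewrite -mulnA [(s * _)%N]mulnC modnMDl.
have -> : i' = (i + (i' - i.+1).+1)%N by lia.
rewrite expnD divnMA divnMDl // (divn_small Bs) addn0 expnS divnMA divnMDl //.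
by rewrite (divn_small js) addn0 addnS subSS addKn.
Qed.

Lemma setdigitE a i j :
  setdigit s a i j = ((a %/ s ^ i %/ s) * s + j) * s ^ i + a %% s ^ i.
Proof.
rewrite /setdigit {1}(digit_decomp a i) !mulnDl.
move: (_ %/ s * s * _)%N (digit s a i * _)%N (a %% _)%N => *; lia.
Qed.

Lemma modn_expn_ltn a i : (a %% s ^ i < s ^ i)%N.
Proof. by rewrite ltn_mod expn_gt0 s_gt0. Qed.

Lemma digit_setdigit a i j : (j < s)%N -> digit s (setdigit s a i j) i = j.
Proof. by move=> js; rewrite setdigitE digitMD ?eqxx ?modn_expn_ltn. Qed.

Lemma digit_setdigit_neq a i j i' : (j < s)%N -> i' != i ->
  digit s (setdigit s a i j) i' = digit s a i'.
Proof.
move=> js ne; rewrite setdigitE {3}(digit_decomp a i).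
by rewrite !digitMD ?digit_ltn ?modn_expn_ltn // (negbTE ne).
Qed.

Lemma setdigit_digit a i : setdigit s a i (digit s a i) = a.
Proof. by rewrite setdigitE -digit_decomp. Qed.

Lemma setdigitK a i j k : (j < s)%N ->
  setdigit s (setdigit s a i j) i k = setdigit s a i k.
Proof.
move=> js; have s_pos : (0 < s ^ i)%N by rewrite expn_gt0 s_gt0.
rewrite [LHS]setdigitE [setdigit s a i j]setdigitE.
rewrite divnMDl // (divn_small (modn_expn_ltn a i)) addn0 divnMDl // (divn_small js).
by rewrite addn0 modnMDl (modn_small (modn_expn_ltn a i)) setdigitE.
Qed.

Lemma setdigit_ltn a i j n : (j < s)%N -> (i < n)%N -> (a < s ^ n)%N ->
  (setdigit s a i j < s ^ n)%N.
Proof.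
move=> js ilt an; rewrite setdigitE.
have B_lt := modn_expn_ltn a i.
set Q := (a %/ s ^ i %/ s)%N; set P := (s ^ i)%N; set B := (a %% P)%N.
have sn : (s ^ n = s ^ (n - i.+1) * s * P)%N by rewrite -expnSr -expnD; congr (_ ^ _); lia.
have Q_lt : (Q < s ^ (n - i.+1))%N.
  by rewrite /Q -divnMA -expnSr ltn_divLR ?expn_gt0 ?s_gt0 // -expnD subnK.
apply: (@leq_trans ((Q * s + j).+1 * P)); first by rewrite mulSn addnC ltn_add2r.
rewrite sn leq_mul2r; apply/orP; right.
apply: (@leq_trans (Q.+1 * s)); first by rewrite mulSn; lia.
by rewrite leq_mul2r Q_lt orbT.
Qed.

Lemma digit_rotdigit a i x : digit s (rotdigit s a i x) i = ((digit s a i + x) %% s)%N.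
Proof. by rewrite digit_setdigit ?ltn_pmod. Qed.

Lemma digit_rotdigit_neq a i i' x : i' != i -> digit s (rotdigit s a i x) i' = digit s a i'.
Proof. by move=> ne; rewrite digit_setdigit_neq ?ltn_pmod. Qed.

Lemma rotdigit_ltn a i x n : (i < n)%N -> (a < s ^ n)%N -> (rotdigit s a i x < s ^ n)%N.
Proof. by move=> ilt an; rewrite setdigit_ltn ?ltn_pmod. Qed.

Lemma rotdigitK a i x : (x <= s)%N -> rotdigit s (rotdigit s a i (s - x)) i x = a.
Proof.
move=> xs; rewrite /rotdigit digit_setdigit ?ltn_pmod // setdigitK ?ltn_pmod //.
by rewrite modnDml -addnA subnK // modnDr modn_small ?digit_ltn // setdigit_digit.
Qed.

End Digits.
Local Open Scope ring_scope.

Lemma power_sums_coord {F : fieldType} {I : finType} {K : {pred I}} {mu : I -> F}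
    {L : nat} {k0 : I} :
  k0 \in K -> (#|K| <= L)%N -> {in K &, injective mu} ->
  exists beta : nat -> F, forall z : I -> F,
    z k0 = \sum_(l < L) beta l * \sum_(k in K) mu k ^+ l * z k.
Proof.
move=> k0K cardK mu_inj.
pose P := \prod_(k in K | k != k0) ('X - (mu k)%:P).
have size_P : (size P <= L)%N.
  rewrite size_prod => [|k _]; last by rewrite polyXsubC_eq0.
  rewrite (eq_bigr (fun=> 2%N)) => [|k _]; last by rewrite size_XsubC.
  rewrite sum_nat_const.
  set n := #|_|; have : (n < #|K|)%N.
    rewrite (cardD1 k0 K) k0K add1n ltnS.
    by apply/eq_leq/eq_card => k; rewrite !inE andbC.
  lia.
have P_root k : k \in K -> k != k0 -> P.[mu k] = 0.
  move=> kK kk0; rewrite horner_prod (bigD1 k) ?kK //=.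
  by rewrite hornerXsubC subrr mul0r.
have P_k0 : P.[mu k0] != 0.
  rewrite horner_prod; apply/prodf_neq0 => k /andP[kK kk0].
  by rewrite hornerXsubC subr_eq0; apply: contra kk0 => /eqP /mu_inj ->.
have P_eval x : P.[x] = \sum_(l < L) P`_l * x ^+ l := horner_coef_wide x size_P.
exists (fun l => P`_l / P.[mu k0]) => z.
rewrite (eq_bigr (fun l : 'I_L => \sum_(k in K) P`_l / P.[mu k0] * (mu k ^+ l * z k)));
  last by move=> l _; rewrite mulr_sumr.
rewrite exchange_big /= (bigD1 k0) //= [X in _ + X]big1 => [|k /andP[kK kk0]].
  rewrite addr0 -[LHS](mulfK P_k0) {1}P_eval mulr_sumr mulr_suml.
  by apply: eq_bigr => l _; ring.
transitivity (z k / P.[mu k0] * P.[mu k]); last by rewrite (P_root k) ?mulr0.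
by rewrite (P_eval (mu k)) mulr_sumr; apply: eq_bigr => l _; ring.
Qed.

Section Repair.

Context {F : fieldType} {nb u sb Y r : nat} {theta xi : F} {p : nat} {i0 : 'I_nb}.
Hypotheses (sb_gt0 : (0 < sb)%N) (Y_gt0 : (0 < Y)%N) (u_gt0 : (0 < u)%N).
Hypothesis theta_u : theta ^+ u = 1.

Definition parity_checks (c : nat -> nat -> nat -> F) : Prop :=
  forall t a y, (t < r)%N -> (a < sb ^ nb)%N -> (y < Y)%N ->
    \sum_(i < nb) \sum_(g < u)
       theta ^+ (g * t) * (xi ^+ (i * sb + digit sb a i)) ^+ t * c y (i * u + g)%N a = 0.

Lemma theta_expM_periodic g m l : theta ^+ (g * (m + u * l)) = theta ^+ (g * m).
Proof. by rewrite mulnDr exprD mulnCA [theta ^+ (u * _)]exprM theta_u expr1n mulr1. Qed.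

Section Node.

Variables (a m : nat).

(* [inl j] stands for rack j, carrying H_{i0,j}(a,m); [inr x] for the x-th rotated sum of
   rack i0. *)
Definition node_exponent (k : 'I_nb + 'I_sb) : nat :=
  match k with
  | inl i => i * sb + digit sb a i
  | inr x => i0 * sb + (digit sb a i0 + x) %% sb
  end.

Definition node_value (c : nat -> nat -> nat -> F) (k : 'I_nb + 'I_sb) : F :=
  match k with
  | inl i => Hval sb Y u theta c p i0 i a m
  | inr x => Qval Y u theta c p i0 x (rotdigit sb a i0 x) m
  end.

Lemma parity_check_rotations c l :
  parity_checks c -> (a < sb ^ nb)%N -> (m + u * l < r)%N ->
  \sum_(k | k != inl i0) (xi ^+ node_exponent k) ^+ (m + u * l) * node_value c k = 0.
Proof.
move=> c_checks a_lt t_lt; set t := (m + u * l)%N.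
have rot_checks : \sum_(x < sb) \sum_(i < nb) \sum_(g < u)
    theta ^+ (g * t) * (xi ^+ (i * sb + digit sb (rotdigit sb a i0 x) i)) ^+ t
      * c ((p + x) %% Y)%N (i * u + g)%N (rotdigit sb a i0 x) = 0.
  by apply: big1 => x _; apply: c_checks; rewrite ?rotdigit_ltn ?ltn_pmod.
rewrite -[RHS]rot_checks exchange_big (bigD1 i0) //= big_sumType /= addrC.
congr (_ + _).
  apply: eq_bigr => x _; rewrite mulr_sumr; apply: eq_bigr => g _.
  by rewrite digit_rotdigit // theta_expM_periodic mulrCA mulrA.
apply: eq_big => [i | i ne]; first by rewrite inj_eq //; exact: inl_inj.
rewrite /= /Hval mulr_sumr; apply: eq_bigr => x _; rewrite mulr_sumr; apply: eq_bigr => g _.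
by rewrite digit_rotdigit_neq // theta_expM_periodic mulrCA mulrA.
Qed.

Definition unknown_node (R : {set 'I_nb}) : {pred 'I_nb + 'I_sb} :=
  [pred k | if k is inl i then (i \notin R) && (i != i0) else true].

Lemma sum_nodes_split (R : {set 'I_nb}) (f : 'I_nb + 'I_sb -> F) : i0 \notin R ->
  \sum_(k | k != inl i0) f k = \sum_(k in unknown_node R) f k + \sum_(j in R) f (inl j).
Proof.
move=> i0R; rewrite !big_sumType /= addrAC; congr (_ + _).
rewrite (bigID (mem R)) /= addrC; congr (_ + _); apply: eq_bigl => i.
  by rewrite inE andbC inj_eq //; exact: inl_inj.
by rewrite inj_eq //; [case: eqP => // ->; rewrite (negbTE i0R) | exact: inl_inj].
Qed.

Lemma card_unknown_node (R : {set 'I_nb}) : i0 \notin R ->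
  #|unknown_node R| = (nb - #|R| - 1 + sb)%N.
Proof.
move=> i0R; rewrite -[LHS]sum1_card big_sumType /= !sum1dep_card.
have -> : [set i | inl i \in unknown_node R] = ~: R :\ i0.
  by apply/setP => i; rewrite !inE andbC.
have -> : [set x | inr x \in unknown_node R] = setT by apply/setP => x; rewrite !inE.
rewrite cardsT card_ord.
have := cardsD1 i0 (~: R); rewrite !inE i0R cardsCs setCK card_ord /=.
move: #|R| #|_ :\ _| => *; lia.
Qed.

Lemma node_exponent_ltn k : (node_exponent k < nb * sb)%N.
Proof.
have row_ltn (i : 'I_nb) e : (e < sb)%N -> (i * sb + e < nb * sb)%N.
  move=> e_lt; apply: (@leq_trans (i.+1 * sb)); first by rewrite mulSn addnC ltn_add2r.
  by rewrite leq_mul2r ltn_ord orbT.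
by case: k => [i|x]; apply: row_ltn; rewrite ?digit_ltn ?ltn_pmod.
Qed.

Lemma node_exponent_inj R : {in unknown_node R &, injective node_exponent}.
Proof.
have rack i e : (e < sb)%N -> ((i * sb + e) %/ sb = i)%N.
  by move=> e_lt; rewrite divnMDl // divn_small ?addn0.
have offset i e : (e < sb)%N -> ((i * sb + e) %% sb = e)%N.
  by move=> e_lt; rewrite modnMDl modn_small.
move=> [i1|x1] [i2|x2]; rewrite !inE /= => K1 K2 E.
- by have := congr1 (divn^~ sb) E; rewrite /= !rack ?digit_ltn // => /val_inj ->.
- have := congr1 (divn^~ sb) E; rewrite /= !rack ?digit_ltn ?ltn_pmod // => /val_inj i1E.
  by move: K1; rewrite i1E eqxx andbF.
- have := congr1 (divn^~ sb) E; rewrite /= !rack ?digit_ltn ?ltn_pmod // => /val_inj i2E.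
  by move: K2; rewrite -i2E eqxx andbF.
- have := congr1 (modn^~ sb) E; rewrite /= !offset ?ltn_pmod // => /eqP.
  by rewrite eqn_modDl !modn_small // => /eqP/val_inj ->.
Qed.

Lemma unknown_node_span N L (R : {set 'I_nb}) k0 :
  N.-primitive_root xi -> (nb * sb * u <= N)%N -> (a < sb ^ nb)%N -> i0 \notin R ->
  (#|unknown_node R| <= L)%N -> (forall l, (l < L)%N -> (m + u * l < r)%N) ->
  k0 \in unknown_node R ->
  exists kappa : 'I_nb -> F, forall c, parity_checks c ->
    node_value c k0 = \sum_(j in R) kappa j * Hval sb Y u theta c p i0 j a m.
Proof.
move=> xi_prim N_large a_lt i0R cardK check_idx k0K.
pose lam k := xi ^+ node_exponent k.
have lam_neq0 k : lam k != 0.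
  apply: expf_neq0; apply/eqP => xi0; move: (prim_expr_order xi_prim).
  by rewrite xi0 expr0n gtn_eqF ?(prim_order_gt0 xi_prim) // => /eqP; rewrite eq_sym oner_eq0.
have mu_inj : {in unknown_node R &, injective (fun k => lam k ^+ u)}.
  have exp_ltn k : (node_exponent k * u < N)%N.
    by apply: leq_trans N_large; rewrite ltn_mul2r u_gt0 node_exponent_ltn.
  move=> k1 k2 K1 K2 /eqP; rewrite /lam -!exprM (eq_prim_root_expr xi_prim).
  by rewrite !modn_small // eqn_pmul2r // => /eqP; apply: node_exponent_inj K1 K2.
have [beta coord] := power_sums_coord k0K cardK mu_inj.
exists (fun j => - (\sum_(l < L) beta l * lam (inl j) ^+ (m + u * l)) / lam k0 ^+ m).
move=> c c_checks.
have power_sum l : (l < L)%N ->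
    \sum_(k in unknown_node R) (lam k ^+ u) ^+ l * (lam k ^+ m * node_value c k) =
    - \sum_(j in R) lam (inl j) ^+ (m + u * l) * node_value c (inl j).
  move=> l_lt; apply/eqP; rewrite -subr_eq0 opprK.
  rewrite (eq_bigr (fun k => lam k ^+ (m + u * l) * node_value c k)) => [|k _]; last first.
    by rewrite exprD exprM mulrA [(_ ^+ u) ^+ l * _]mulrC.
  by rewrite -sum_nodes_split // parity_check_rotations ?check_idx.
apply: (mulfI (expf_neq0 m (lam_neq0 k0))); rewrite (coord (fun k => lam k ^+ m * node_value c k)).
rewrite (eq_bigr (fun l : 'I_L =>
    - \sum_(j in R) beta l * (lam (inl j) ^+ (m + u * l) * node_value c (inl j)))) => [|l _];
  last by rewrite power_sum // mulrN mulr_sumr.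
rewrite sumrN exchange_big mulr_sumr -sumrN; apply: eq_bigr => j _.
rewrite (eq_bigr (fun l : 'I_L => beta l * lam (inl j) ^+ (m + u * l) * node_value c (inl j)))
  => [|l _]; last by rewrite mulrA.
by rewrite -mulr_suml /=; field; rewrite expf_neq0.
Qed.

End Node.

Lemma sum_delta_coef (R : {set 'I_nb}) (N lo hi a0 m0 : nat) (kappa : 'I_nb -> F)
    (f : 'I_nb -> nat -> nat -> F) :
  (a0 < N)%N -> (lo <= m0 < hi)%N ->
  \sum_(j in R) \sum_(0 <= a < N) \sum_(lo <= m < hi)
     (if (a == a0) && (m == m0) then kappa j else 0) * f j a m
  = \sum_(j in R) kappa j * f j a0 m0.
Proof.
move=> a0_lt m0_in; apply: eq_bigr => j _.
rewrite (eq_bigr (fun a => if a == a0 then kappa j * f j a0 m0 else 0)) => [|a _].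
  by rewrite -big_mkcond big_nat1_eq /= a0_lt.
case: eqP => [-> | _] /=; last by apply: big1 => m _; rewrite mul0r.
rewrite (eq_bigr (fun m => if m == m0 then kappa j * f j a0 m else 0)) => [|m _].
  by rewrite -big_mkcond big_nat1_eq m0_in.
by case: eqP => _; rewrite ?mul0r.
Qed.

Lemma repair_combination {N L} {R : {set 'I_nb}} a m lo hi :
  N.-primitive_root xi -> (nb * sb * u <= N)%N -> (a < sb ^ nb)%N -> i0 \notin R ->
  (nb - #|R| - 1 + sb <= L)%N -> (forall l, (l < L)%N -> (m + u * l < r)%N) ->
  (lo <= m < hi)%N ->
  (forall x, (x < sb)%N -> exists coef : 'I_nb -> nat -> nat -> F,
     forall c, parity_checks c ->
       Qval Y u theta c p i0 x a m =
       \sum_(j in R) \sum_(0 <= a' < sb ^ nb) \sum_(lo <= m' < hi)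
          coef j a' m' * Hval sb Y u theta c p i0 j a' m')
  /\
  (forall i : 'I_nb, i \notin R -> i != i0 -> exists coef : 'I_nb -> nat -> nat -> F,
     forall c, parity_checks c ->
       Hval sb Y u theta c p i0 i a m =
       \sum_(j in R) \sum_(0 <= a' < sb ^ nb) \sum_(lo <= m' < hi)
          coef j a' m' * Hval sb Y u theta c p i0 j a' m').
Proof.
move=> xi_prim N_large a_lt i0R cardR check_idx m_in.
rewrite -(card_unknown_node R i0R) in cardR.
split=> [x x_lt | i iR ii0].
  pose a0 := rotdigit sb a i0 (sb - x).
  have a0_lt : (a0 < sb ^ nb)%N by rewrite rotdigit_ltn.
  have [|kappa span] := unknown_node_span a0 m N L R (inr (Ordinal x_lt))
    xi_prim N_large a0_lt i0R cardR check_idx.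
    by rewrite inE.
  exists (fun j a' m' => if (a' == a0) && (m' == m) then kappa j else 0) => c c_checks.
  by rewrite sum_delta_coef // -span //= rotdigitK // ltnW.
have [|kappa span] := unknown_node_span a m N L R (inl i)
  xi_prim N_large a_lt i0R cardR check_idx.
  by rewrite inE iR ii0.
exists (fun j a' m' => if (a' == a) && (m' == m) then kappa j else 0) => c c_checks.
by rewrite sum_delta_coef // -span.
Qed.

End Repair.

Lemma check_index_ltn {nb kb u v m l} j :
  (m + v < u * j)%N -> (l + j <= nb - kb)%N -> (m + u * l < nb * u - (kb * u + v))%N.
Proof.
move=> mv_lt lj_le; have : (u * (l + j) <= u * (nb - kb))%N by rewrite leq_mul2l lj_le orbT.
rewrite mulnDr mulnBr [(nb * u)%N]mulnC [(kb * u)%N]mulnC; lia.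
Qed.

Theorem lemma1 (F : finFieldType) (nb u kb v db hb dl : nat) (theta xi : F)
    (ifam : 'I_hb -> 'I_nb) (p : 'I_hb) :
  (1 < nb)%N -> (1 < u)%N -> (v < u)%N ->
  (1 <= dl)%N -> (dl < hb)%N -> (kb <= db)%N -> (db + hb <= nb)%N ->
  (nb * u * sbar kb db + 1 <= #|F|)%N ->
  u.-primitive_root theta -> (#|F|.-1).-primitive_root xi ->
  injective ifam ->
  let sb := sbar kb db in
  let Y := nsub sb hb dl in
  let ip : nat := ifam p in
  (* part (1) *)
  (forall (b : nat) (R : {set 'I_nb}),
     (1 <= b <= u - v)%N -> #|R| = db ->
     [disjoint R & [set ifam q | q : 'I_hb]] ->
     forall a m, (a < sb ^ nb)%N -> (m < b)%N ->
       (forall x, (x < sb)%N ->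
          exists coef : 'I_nb -> nat -> nat -> F,
          forall c, is_codeword nb u kb v db hb dl theta xi c ->
            Qval Y u theta c p ip x a m =
            \sum_(j in R) \sum_(0 <= a' < sb ^ nb) \sum_(0 <= m' < b)
               coef j a' m' * Hval sb Y u theta c p ip j a' m')
       /\
       (forall q : 'I_hb, q != p ->
          exists coef : 'I_nb -> nat -> nat -> F,
          forall c, is_codeword nb u kb v db hb dl theta xi c ->
            Hval sb Y u theta c p ip (ifam q) a m =
            \sum_(j in R) \sum_(0 <= a' < sb ^ nb) \sum_(0 <= m' < b)
               coef j a' m' * Hval sb Y u theta c p ip j a' m'))
  /\
  (* part (2) *)
  (forall (b : nat) (R : {set 'I_nb}),
     (u - v + 1 <= b <= u)%N -> #|R| = (db + 1)%N ->
     [disjoint R & [set ifam q | q : 'I_hb]] ->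
     forall a m, (a < sb ^ nb)%N -> (u - v <= m < b)%N ->
       (forall x, (x < sb)%N ->
          exists coef : 'I_nb -> nat -> nat -> F,
          forall c, is_codeword nb u kb v db hb dl theta xi c ->
            Qval Y u theta c p ip x a m =
            \sum_(j in R) \sum_(0 <= a' < sb ^ nb) \sum_(u - v <= m' < b)
               coef j a' m' * Hval sb Y u theta c p ip j a' m')
       /\
       (forall q : 'I_hb, q != p ->
          exists coef : 'I_nb -> nat -> nat -> F,
          forall c, is_codeword nb u kb v db hb dl theta xi c ->
            Hval sb Y u theta c p ip (ifam q) a m =
            \sum_(j in R) \sum_(0 <= a' < sb ^ nb) \sum_(u - v <= m' < b)
               coef j a' m' * Hval sb Y u theta c p ip j a' m')).
Proof.
move=> _ u_gt1 v_lt dl_ge dl_lt kb_le dh_le card_F theta_prim xi_prim ifam_inj sb Y ip.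
have sb_gt0 : (0 < sb)%N by rewrite /sb /sbar addn1.
have Y_gt0 : (0 < Y)%N by rewrite /Y /nsub subn_gt0 (leq_trans dl_lt) ?leq_addl.
have u_gt0 : (0 < u)%N := ltnW u_gt1.
have theta_u := prim_expr_order theta_prim.
have N_large : (nb * sb * u <= #|F|.-1)%N by move: card_F; rewrite /sb mulnAC; lia.
have ifam_notin (R : {set 'I_nb}) q : [disjoint R & [set ifam q | q : 'I_hb]] -> ifam q \notin R.
  by move=> dis; apply/negbT/(disjointFl dis)/imsetP; exists q.
have ifam_neq q : q != p -> ifam q != ifam p by apply: contra => /eqP /ifam_inj ->.
split=> b R /andP[_ b_le] card_R dis a m a_lt m_in.
- have card_L : (nb - #|R| - 1 + sb <= nb - kb)%N by rewrite card_R /sb /sbar; lia.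
  have idx l : (l < nb - kb)%N -> (m + u * l < nb * u - (kb * u + v))%N.
    by move=> l_lt; apply: (check_index_ltn 1); lia.
  have [Q_span H_span] := repair_combination (p := p) sb_gt0 Y_gt0 u_gt0 theta_u a m 0 b
    xi_prim N_large a_lt (ifam_notin R p dis) card_L idx m_in.
  split=> [x x_lt | q q_ne]; first exact: Q_span.
  exact: H_span (ifam_notin R q dis) (ifam_neq q q_ne).
- have card_L : (nb - #|R| - 1 + sb <= nb - kb - 1)%N by rewrite card_R /sb /sbar; lia.
  have idx l : (l < nb - kb - 1)%N -> (m + u * l < nb * u - (kb * u + v))%N.
    by move=> l_lt; apply: (check_index_ltn 2); lia.
  have [Q_span H_span] := repair_combination (p := p) sb_gt0 Y_gt0 u_gt0 theta_u a m (u - v) b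
    xi_prim N_large a_lt (ifam_notin R p dis) card_L idx m_in.
  split=> [x x_lt | q q_ne]; first exact: Q_span.
  exact: H_span (ifam_notin R q dis) (ifam_neq q q_ne).
Qed.
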